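(* Let $\mathcal{A}$ be a finite alphabet, $\mathbf{p}$ an irreducible pair on $\mathcal{A}$ and $\mathbf{q}$ a pair in the labeled Rauzy class of $\mathbf{p}$. Then $\mathcal{S}(\mathbf{q})=\mathcal{S}(\mathbf{p})$.
   Context: Let $n=\#\mathcal{A}$. A pair is $\mathbf{p}=(p_0,p_1)$ with $p_0,p_1:\mathcal{A}\to\{1,\dots,n\}$ bijections. Irreducible: $p_0^{-1}\{1,\dots,k\}\ne p_1^{-1}\{1,\dots,k\}$ for $1\le k<n$. Rauzy move of type $\varepsilon\in\{0,1\}$: $\varepsilon\mathbf{p}=(p'_0,p'_1)$, $p'_\varepsilon=p_\varepsilon$, and for $z=p_\varepsilon^{-1}(n)$, $p'_{1-\varepsilon}(b)=p_{1-\varepsilon}(b)$ if $p_{1-\varepsilon}(b)\le p_{1-\varepsilon}(z)$, $=p_{1-\varepsilon}(b)+1$ if $p_{1-\varepsilon}(z)<p_{1-\varepsilon}(b)<n$, $=p_{1-\varepsilon}(z)+1$ if $p_{1-\varepsilon}(b)=n$. The labeled Rauzy class of $\mathbf{p}$ is the set of pairs reachable from $\mathbf{p}$ by Rauzy moves. For irreducible $\mathbf{p}$, $\mathcal{S}(\mathbf{p}):\mathcal{A}\to\mathcal{A}$ is defined by $\mathcal{S}(\mathbf{p})(\alpha)=p_0^{-1}(1)$ if $p_1(\alpha)=1$; $=p_0^{-1}(p_0(p_1^{-1}(n))+1)$ if $p_1(\alpha)=p_1(p_0^{-1}(n))+1$; $=p_0^{-1}(p_0(p_1^{-1}(p_1(\alpha)-1))+1)$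 otherwise. *)

From mathcomp Require Import all_boot.
Set Implicit Arguments. Unset Strict Implicit. Unset Printing Implicit Defensive.

Section Rauzy.
Variable A : finType.

(* A pair p = (p_0, p_1); component [comp e p] is p_e, with e : bool
   (false = 0, true = 1). Values are taken in nat. *)
Definition pairT := ((A -> nat) * (A -> nat))%type.

Definition comp (e : bool) (p : pairT) : A -> nat := if e then p.2 else p.1.

Definition bij_onto (f : A -> nat) : Prop :=
  injective f /\ (forall a, 1 <= f a <= #|A|) /\
  (forall k, 1 <= k <= #|A| -> exists a, f a = k).

Definition is_pair (p : pairT) : Prop := bij_onto p.1 /\ bij_onto p.2.

Definition irreducible (p : pairT) : Prop :=
  is_pair p /\
  forall k, 1 <= k < #|A| ->
    [set a | p.1 a <= k] <> [set a | p.2 a <= k].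

(* inverse of f at k, with default d (only used where the preimage exists) *)
Definition inv (f : A -> nat) (d : A) (k : nat) : A :=
  odflt d [pick a | f a == k].

Definition rauzy_move (eps : bool) (p : pairT) : pairT :=
  let pe := comp eps p in
  let po := comp (~~ eps) p in
  let n := #|A| in
  let newo := fun b : A =>
    if [pick z | pe z == n] is Some z then
      (if po b <= po z then po b
       else if po b < n then (po b).+1
       else (po z).+1)
    else po b in
  if eps then (newo, p.2) else (p.1, newo).

Inductive in_rauzy_class (p : pairT) : pairT -> Prop :=
  | rc_refl : in_rauzy_class p p
  | rc_step q eps : in_rauzy_class p q -> in_rauzy_class p (rauzy_move eps q).

Definition S_map (p : pairT) (alpha : A) : A :=
  let p0 := p.1 in let p1 := p.2 in let n := #|A| in
  if p1 alpha == 1 then inv p0 alpha 1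
  else if p1 alpha == (p1 (inv p0 alpha n)).+1 then
    inv p0 alpha (p0 (inv p1 alpha n)).+1
  else inv p0 alpha (p0 (inv p1 alpha (p1 alpha).-1)).+1.

End Rauzy.

From Pilot Require Import Defs.
From mathcomp Require Import all_boot.
From mathcomp Require Import zify.
Set Implicit Arguments. Unset Strict Implicit. Unset Printing Implicit Defensive.

(* S(p)(α) is the top-row successor of the bottom-row predecessor of α, with
   two boundary conventions: the bottom-first letter goes to the top-first
   letter, and a top-last predecessor is replaced by the bottom-last letter.
   This description is a relation between positions only ([S_spec]), and it
   determines S(p)(α) uniquely. A Rauzy move of type ε takes the last letter
   of row 1-ε and reinserts it right after the letter that is last in row ε;
   checking the three cases of the relation across this reinsertion shows
   that the relation, hence S, is unchanged. Irreducibility is only needed to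
   know that p is a pair. *)

Section RauzyInvariance.
Variable A : finType.
Local Notation n := #|A|.

Definition S_spec (f0 f1 : A -> nat) (a b : A) : Prop :=
  (f1 a = 1 /\ f0 b = 1) \/
  (exists c, f1 a = (f1 c).+1 /\ f0 c < n /\ f0 b = (f0 c).+1) \/
  (exists c w, f1 a = (f1 c).+1 /\ f0 c = n /\ f1 w = n /\ f0 b = (f0 w).+1).

(* Move the letter at position [n] to position [m.+1], shifting the
   positions in [(m, n)] one step to the right. *)
Definition reinsert_last (f : A -> nat) (m : nat) (b : A) : nat :=
  if f b <= m then f b else if f b < n then (f b).+1 else m.+1.

Lemma inv_eq (f : A -> nat) (d a : A) (k : nat) :
  injective f -> f a = k -> Defs.inv f d k = a.
Proof.
move=> inj_f fa; rewrite /Defs.inv; case: pickP => [x /eqP fx | /(_ a)] /=.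
  by apply: inj_f; rewrite fx fa.
by rewrite fa eqxx.
Qed.

Lemma bij_onto_lt_card (f : A -> nat) (x z : A) :
  bij_onto f -> f z = n -> x <> z -> f x < n.
Proof.
move=> [inj_f [range_f _]] fz xz; have := range_f x.
suff : f x <> n by lia.
by move=> fx; apply: xz; apply: inj_f; rewrite fx fz.
Qed.

Lemma bij_onto_reinsert_last (f : A -> nat) (m : nat) :
  bij_onto f -> bij_onto (reinsert_last f m).
Proof.
move=> [inj_f [range_f onto_f]]; rewrite /reinsert_last; split; last split.
- move=> b b' E; apply: inj_f; move: E; have := range_f b; have := range_f b'.
  by repeat case: ifP => ?; lia.
- by move=> b; have := range_f b; repeat case: ifP => ?; lia.
- move=> k Hk; case: (leqP k m) => [k_le_m | m_lt_k].
    by have [b fb] := onto_f k Hk; exists b; rewrite fb k_le_m.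
  have [b fb] : exists b, f b = if k == m.+1 then n else k.-1.
    by apply: onto_f; case: eqP; lia.
  by exists b; rewrite fb; case: eqP => ?; repeat case: ifP => ?; lia.
Qed.

Section Pair.
Variables f0 f1 : A -> nat.
Hypotheses (bij0 : bij_onto f0) (bij1 : bij_onto f1).

Lemma S_map_spec (a : A) : S_spec f0 f1 a (S_map (f0, f1) a).
Proof.
have [inj0 [range0 onto0]] := bij0; have [inj1 [range1 onto1]] := bij1.
rewrite /S_map /=; have := range1 a => range_a.
have [z z_last] : exists z, f0 z = n by apply: onto0; lia.
have [w w_last] : exists w, f1 w = n by apply: onto1; lia.
case: (eqVneq (f1 a) 1) => [a_first | /eqP a_not_first].
  have [b b_first] : exists b, f0 b = 1 by apply: onto0; lia.
  by left; rewrite (inv_eq a inj0 b_first).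
have [c c_pred] : exists c, f1 c = (f1 a).-1 by apply: onto1; lia.
rewrite (inv_eq a inj0 z_last) (inv_eq a inj1 w_last).
case: (eqVneq (f1 a) (f1 z).+1) => [a_after_z | /eqP a_not_after_z].
  have cz : c = z by apply: inj1; lia.
  have w0 : f0 w < n by apply: (bij_onto_lt_card bij0 z_last) => wz; subst; lia.
  have [b b_succ] : exists b, f0 b = (f0 w).+1 by apply: onto0; lia.
  by right; right; exists z, w; rewrite (inv_eq a inj0 b_succ); lia.
have c0 : f0 c < n by apply: (bij_onto_lt_card bij0 z_last) => cz; subst; lia.
have [b b_succ] : exists b, f0 b = (f0 c).+1 by apply: onto0; lia.
by right; left; exists c; rewrite (inv_eq a inj1 c_pred) (inv_eq a inj0 b_succ); lia.
Qed.

Lemma S_spec_functional (a b b' : A) :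
  S_spec f0 f1 a b -> S_spec f0 f1 a b' -> b = b'.
Proof.
have [inj0 [_ _]] := bij0; have [inj1 [range1 _]] := bij1.
move=> [[a1 b1] | [[c [ac [c0 b0]]] | [c [w [ac [c0 [w1 b0]]]]]]];
move=> [[a1' b1'] | [[c' [ac' [c0' b0']]] | [c' [w' [ac' [c0' [w1' b0']]]]]]];
apply: inj0; try have := range1 c; try have := range1 c'; try lia.
all: have cc' : c = c' by apply: inj1; lia.
all: subst c'; try lia.
have ww' : w = w' by apply: inj1; lia.
by subst; lia.
Qed.

Lemma S_spec_reinsert_bottom (z a b : A) : f0 z = n ->
  S_spec f0 f1 a b -> S_spec f0 (reinsert_last f1 (f1 z)) a b.
Proof.
have [inj0 [range0 _]] := bij0; have [inj1 [range1 _]] := bij1.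
move=> z_last; rewrite /S_spec /reinsert_last.
have := range1 a; have := range1 z => range_z range_a.
move=> [[a1 b1] | [[c [ac [c0 b0]]] | [c [w [ac [c0 [w1 b0]]]]]]].
- by left; split => //; rewrite a1; repeat case: ifP => ?; lia.
- have := range1 c => range_c.
  have f1cz : f1 c <> f1 z by move=> /inj1 cz; subst; lia.
  case: (leqP (f1 a) (f1 z)) => [a_le | z_lt].
    by right; left; exists c; repeat case: ifP => ?; lia.
  case: (ltnP (f1 a) n) => [a_lt | a_last].
    by right; left; exists c; repeat case: ifP => ?; lia.
  by right; right; exists z, c; repeat case: ifP => ?; lia.
- have cz : c = z by apply: inj0; rewrite c0 z_last.
  subst c; have := range1 w => range_w.
  case: (ltnP (f1 z).+1 n) => [a_lt | a_last].
    have w0 : f0 w < n by apply: (bij_onto_lt_card bij0 z_last) => wz; subst; lia.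
    by right; left; exists w; repeat case: ifP => ?; lia.
  by right; right; exists z, w; repeat case: ifP => ?; lia.
Qed.

Lemma S_spec_reinsert_top (w a b : A) : f1 w = n ->
  S_spec f0 f1 a b -> S_spec (reinsert_last f0 (f0 w)) f1 a b.
Proof.
have [inj0 [range0 _]] := bij0; have [inj1 [range1 _]] := bij1.
move=> w_last; rewrite /S_spec /reinsert_last.
have := range1 a; have := range0 b; have := range0 w => range_w range_b range_a.
move=> [[a1 b1] | [[c [ac [c0 b0]]] | [c [w' [ac [c0 [w1 b0]]]]]]].
- by left; split => //; rewrite b1; repeat case: ifP => ?; lia.
- have := range1 c; have := range0 c => range0_c range1_c.
  have f0cw : f0 c <> f0 w by move=> /inj0 cw; subst; lia.
  case: (ltnP (f0 c) (f0 w)) => [c_lt | w_lt].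
    by right; left; exists c; repeat case: ifP => ?; lia.
  case: (ltnP (f0 c).+1 n) => [c_succ_lt | c_succ_last].
    by right; left; exists c; repeat case: ifP => ?; lia.
  by right; right; exists c, w; repeat case: ifP => ?; lia.
- have ww' : w' = w by apply: inj1; rewrite w1 w_last.
  subst w'; have := range1 c; have := range0 c => range0_c range1_c.
  have w0 : f0 w < n by apply: (bij_onto_lt_card bij0 c0) => wc; subst; lia.
  case: (ltnP (f0 w).+1 n) => [w_succ_lt | w_succ_last].
    by right; left; exists c; repeat case: ifP => ?; lia.
  by right; right; exists c, w; repeat case: ifP => ?; lia.
Qed.

End Pair.

Lemma rauzy_move_invariant (eps : bool) (p : pairT A) : is_pair p ->
  is_pair (rauzy_move eps p) /\ S_map (rauzy_move eps p) =1 S_map p.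
Proof.
case: p => f0 f1 [/= bij0 bij1]; rewrite /rauzy_move.
case: pickP => [z /eqP z_last | _]; last by case: eps.
case: eps z_last => /= z_last.
- have bij0' := bij_onto_reinsert_last (f0 z) bij0.
  split => [// | a]; apply: (S_spec_functional bij0' bij1 (S_map_spec bij0' bij1 a)).
  exact: (S_spec_reinsert_top bij0 bij1 z_last (S_map_spec bij0 bij1 a)).
- have bij1' := bij_onto_reinsert_last (f1 z) bij1.
  split => [// | a]; apply: (S_spec_functional bij0 bij1' (S_map_spec bij0 bij1' a)).
  exact: (S_spec_reinsert_bottom bij0 bij1 z_last (S_map_spec bij0 bij1 a)).
Qed.

End RauzyInvariance.

Theorem proposition2p10 (A : finType) (p q : pairT A) :
  irreducible p -> in_rauzy_class p q ->
  forall alpha : A, S_map q alpha = S_map p alpha.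
Proof.
move=> [pair_p _] p_to_q.
suff [] : is_pair q /\ S_map q =1 S_map p by [].
elim: p_to_q => [// | q' eps _ [pair_q' S_q']].
have [pair_move S_move] := rauzy_move_invariant eps pair_q'.
by split => // a; rewrite S_move S_q'.
Qed.
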